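(* Let $0\le\alpha\le2$, $1+\mu>0$ and $\gamma>0$. There is a constant $C$, depending only on lower bounds for $\gamma$ and $1+\mu$, such that for every $u\in C^1_0([0,\infty))$ and every $t\ge0$, $$\int_0^t\frac{u^2}{(1+|r-t|)^{2+\mu}}\frac{r^2\,dr}{(1+t+r)^\alpha}+\int_t^\infty\frac{u^2}{(1+|r-t|)^{1-\gamma}}\frac{r^2\,dr}{(1+t+r)^\alpha}\le C\int_0^t\frac{|\partial_ru|^2}{(1+|r-t|)^\mu}\frac{r^2\,dr}{(1+t+r)^\alpha}+C\int_t^\infty|\partial_ru|^2\frac{(1+|r-t|)^{1+\gamma}}{(1+t+r)^\alpha}r^2\,dr .$$
   Context: $C^1_0([0,\infty))$ denotes continuously differentiable functions on $[0,\infty)$ with compact support (not necessarily vanishing at $r=0$). *)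

From HB Require Import structures.
From mathcomp Require Import all_boot all_order all_algebra.
From mathcomp Require Import all_classical all_reals all_analysis.
Set Implicit Arguments. Unset Strict Implicit. Unset Printing Implicit Defensive.
Import Order.TTheory GRing.Theory Num.Theory.
Import numFieldNormedType.Exports.
Local Open Scope classical_set_scope.
Local Open Scope ring_scope.

Definition C1_0 (R : realType) (u du : R -> R) : Prop :=
  (forall r : R, 0 < r -> is_derive r 1 u (du r)) /\
  (fun h : R => h^-1 * (u h - u 0)) @ 0^'+ --> du 0 /\
  {within `[0, +oo[, continuous du} /\
  (exists M : R, forall r : R, M < r -> u r = 0).

From HB Require Import structures.
From mathcomp Require Import all_boot all_order all_algebra.
From mathcomp Require Import all_classical all_reals all_analysis.
From mathcomp Require Import ring lra.
Import Order.TTheory GRing.Theory Num.Theory.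
Import numFieldNormedType.Exports.
Local Open Scope classical_set_scope.
Local Open Scope ring_scope.

(* Weighted Hardy inequality by completing a square.  If [phi = w * s], [w >= 0]
   and [phi' >= c * w], then pointwise
     w u^2 <= (2/c) (phi u^2)' + (4/c^2) w s^2 u'^2,
   the difference being (2/c) (phi' - c w) u^2 + w (u + (2 s / c) u')^2, so
   integrating over a segment only costs the boundary values of [phi u^2].
   Take s = 1 + |r - t| and phi = r^2 (1 + t + r)^-alpha s^e, with e = -1 - mu
   on [0, t] and e = gamma on [t, +oo[: since alpha <= 2, the factor
   r^2 (1 + t + r)^-alpha is nondecreasing, whence phi' >= c phi / s with
   c = min (1 + mu) gamma.  The weight vanishes at r = 0, the two weights agree
   at r = t so the boundary terms there cancel, and u vanishes far out; hence
   C = 4 / min(gamma0, m0)^2 works. *)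

Section within_continuity.
Context {R : realType} (A : set R).

Lemma within_continuousD (f g : R -> R) : {within A, continuous f} ->
  {within A, continuous g} -> {within A, continuous (f \+ g)}.
Proof. by move=> cf cg x; exact: (continuousD (cf x) (cg x)). Qed.

Lemma within_continuousM (f g : R -> R) : {within A, continuous f} ->
  {within A, continuous g} -> {within A, continuous (f \* g)}.
Proof. by move=> cf cg x; apply: continuousM; [exact: cf | exact: cg]. Qed.

Lemma within_continuousZ (k : R) (f : R -> R) : {within A, continuous f} ->
  {within A, continuous (fun x => k * f x)}.
Proof.
by apply: (@within_continuousM (cst k)); apply: continuous_subspaceT; exact: cst_continuous.
Qed.

End within_continuity.

Section derive_lemmas.
Context {R : realType}.

Lemma is_derive_continuous (f : R -> R) (x df : R) :
  is_derive x 1 f df -> {for x, continuous f}.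
Proof. by move=> [df_x _]; apply: differentiable_continuous; exact/derivable1_diffP. Qed.

Lemma is_derive_powR_comp (p : R) {f : R -> R} {x df : R} :
  is_derive x 1 f df -> 0 < f x ->
  is_derive x 1 (fun y => f y `^ p) (p * f x `^ (p - 1) * df).
Proof. by move=> df_x fx0; exact: (is_derive1_comp (is_derive1_powR p fx0) df_x). Qed.

Lemma is_derive_affine (k s x : R) : is_derive x 1 (fun r => k + s * r) s.
Proof. by apply: is_derive_eq; rewrite add0r mul1r /GRing.scale /= mulr1. Qed.

Lemma is_derive_shift (k x : R) : is_derive x 1 (fun r => k + r) 1.
Proof. by have := is_deriveD (is_derive_cst k x 1) (is_derive_id x 1); rewrite add0r. Qed.

Lemma is_derive_eq0_tail {f : R -> R} {M x df : R} :
  (forall r, M < r -> f r = 0) -> M < x -> is_derive x 1 f df -> df = 0.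
Proof.
move=> f0 Mx df_x; have <- : 'D_1 f x = df := derive_val.
rewrite -(derive_cst 0 x 1).
apply: near_eq_derive; near=> y; apply: f0.
by near: y; exact: lt_nbhsr.
Unshelve. all: by end_near.
Qed.

Lemma powRB1_mulr {y : R} (p : R) : 0 < y -> y `^ (p - 1) * y = y `^ p.
Proof.
move=> y0; rewrite -{2}(powRr1 (ltW y0)) -powRD ?subrK //.
by rewrite (gt_eqF y0) implybT.
Qed.

End derive_lemmas.

Section weighted_hardy.
Context {R : realType}.

Lemma hardy_pointwise (c w s dphi x y : R) : 0 < c -> 0 <= w -> c * w <= dphi ->
  w * x ^+ 2 <= 2 / c * (dphi * x ^+ 2 + 2 * (w * s) * x * y)
                + 4 / c ^+ 2 * (w * s ^+ 2 * y ^+ 2).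
Proof.
move=> c0 w0 cw.
have -> : 2 / c * (dphi * x ^+ 2 + 2 * (w * s) * x * y) + 4 / c ^+ 2 * (w * s ^+ 2 * y ^+ 2)
    = w * x ^+ 2 + (2 / c * (dphi - c * w) * x ^+ 2 + w * (x + 2 * s / c * y) ^+ 2).
  by field; rewrite gt_eqF.
rewrite lerDl addr_ge0 // mulr_ge0 ?sqr_ge0 //.
by rewrite mulr_ge0 ?subr_ge0 // divr_ge0 // ltW.
Qed.

Lemma integrable_itvcc {a b : R} {f : R -> R} : {within `[a, b], continuous f} ->
  lebesgue_measure.-integrable `[a, b] (EFin \o f).
Proof. by apply: continuous_compact_integrable; exact: segment_compact. Qed.

Lemma le_integral_FTC (a b k1 k2 : R) (f1 f2 f F : R -> R) : a <= b ->
  {within `[a, b], continuous f1} -> {within `[a, b], continuous f2} ->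
  {within `[a, b], continuous f} -> {within `[a, b], continuous F} ->
  {in `]a, b[, forall x : R, is_derive x 1 F (f x)} ->
  {in `[a, b], forall x, f1 x <= k1 * f x + k2 * f2 x} ->
  (\int[lebesgue_measure]_(x in `[a, b]) (f1 x)%:E <=
    (k1 * (F b - F a))%:E + k2%:E * \int[lebesgue_measure]_(x in `[a, b]) (f2 x)%:E)%E.
Proof.
rewrite le_eqVlt => /predU1P[<- _ _ _ _ _ _|ab cf1 cf2 cf cF dF f1le].
  by rewrite set_itv1 !integral_set1 subrr mulr0 mule0 adde0.
have [_ Fa Fb] := (continuous_within_itvP _ ab).1 cF.
have FTC : (\int[lebesgue_measure]_(x in `[a, b]) (f x)%:E = (F b)%:E - (F a)%:E)%E.
  apply: continuous_FTC2 => //.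
    by split => // x /dF [].
  by move=> x /dF dFx; rewrite derive1E derive_val.
have i := integrable_itvcc cf; have i2 := integrable_itvcc cf2.
apply: (@le_trans _ _ (\int[lebesgue_measure]_(x in `[a, b]) (k1 * f x + k2 * f2 x)%:E)%E).
  apply: le_integral => //; first exact: integrable_itvcc.
    by apply: integrable_itvcc; apply: within_continuousD; exact: within_continuousZ.
  by move=> x /set_mem /f1le; rewrite lee_fin.
under eq_integral do rewrite EFinD !EFinM.
rewrite integralD //; try exact: integrableZl.
by rewrite !integralZl // FTC EFinM EFinB.
Qed.

Lemma hardy_segment (a b c : R) (phi dphi w s u du : R -> R) : a <= b -> 0 < c ->
  {within `[a, b], continuous phi} -> {within `[a, b], continuous dphi} ->
  {within `[a, b], continuous w} -> {within `[a, b], continuous s} ->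
  {within `[a, b], continuous u} -> {within `[a, b], continuous du} ->
  {in `]a, b[, forall x : R, is_derive x 1 phi (dphi x)} ->
  {in `]a, b[, forall x : R, is_derive x 1 u (du x)} ->
  {in `[a, b], forall x, [/\ 0 <= w x, c * w x <= dphi x & phi x = w x * s x]} ->
  (\int[lebesgue_measure]_(x in `[a, b]) (w x * u x ^+ 2)%:E <=
    (2 / c * (phi b * u b ^+ 2 - phi a * u a ^+ 2))%:E
    + (4 / c ^+ 2)%:E * \int[lebesgue_measure]_(x in `[a, b]) (w x * s x ^+ 2 * du x ^+ 2)%:E)%E.
Proof.
move=> ab c0 cphi cdphi cw cs cu cdu dphiP duP hw.
have cu2 : {within `[a, b], continuous (fun x => u x ^+ 2)}.
  by apply: (@within_continuousM _ _ u u).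
apply: (le_integral_FTC _ _ _ _ _ _
  (fun x => dphi x * u x ^+ 2 + 2 * phi x * u x * du x) (fun x => phi x * u x ^+ 2)) => //.
- exact: within_continuousM.
- apply: within_continuousM => //; apply: within_continuousM => //.
  exact: (@within_continuousM _ _ s s).
- apply: within_continuousD; first exact: within_continuousM.
  apply: within_continuousM => //; apply: within_continuousM => //.
  exact: within_continuousZ.
- exact: within_continuousM.
- move=> x /[dup] /dphiP dphix /duP dux.
  by apply: is_derive_eq; rewrite /GRing.scale /=; ring.
- by move=> x /hw [w0 cwx ->]; exact: hardy_pointwise.
Qed.

End weighted_hardy.

Section power_weight.
Context {R : realType} (d al k sg : R).

Definition power_weight (e r : R) := r ^+ 2 * (d + r) `^ (- al) * (k + sg * r) `^ e.

Definition power_weight' (e r : R) :=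
  r * (d + r) `^ (- al - 1) * (k + sg * r) `^ (e - 1) *
  ((2 - al) * r * (k + sg * r) + 2 * d * (k + sg * r) + e * sg * r * (d + r)).

Section at_point.
Variables (e x : R).
Hypotheses (dx0 : 0 < d + x) (sx0 : 0 < k + sg * x).

Lemma is_derive_power_weight : is_derive x 1 (power_weight e) (power_weight' e x).
Proof.
have := is_derive_powR_comp (- al) (is_derive_shift d x) dx0.
have := is_derive_powR_comp e (is_derive_affine k sg x) sx0.
move=> dS dA; apply: is_derive_eq.
rewrite /GRing.scale /= /power_weight' -(powRB1_mulr (- al) dx0) -(powRB1_mulr e sx0).
by ring.
Qed.

Lemma continuous_power_weight' : {for x, continuous (power_weight' e)}.
Proof.
have := is_derive_powR_comp (- al - 1) (is_derive_shift d x) dx0.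
have := is_derive_powR_comp (e - 1) (is_derive_affine k sg x) sx0.
by move=> dS dA; apply/differentiable_continuous/derivable1_diffP/ex_derive.
Qed.

Lemma power_weightS : power_weight (e + 1) x = power_weight e x * (k + sg * x).
Proof. by rewrite /power_weight -[RHS]mulrA -(powRB1_mulr (e + 1) sx0) addrK. Qed.

Lemma power_weight'_ge (c : R) : 0 < d -> 0 <= x -> al <= 2 -> c <= sg * (e + 1) ->
  c * power_weight e x <= power_weight' (e + 1) x.
Proof.
move=> d0 x0 al2 ce; rewrite -subr_ge0.
have -> : power_weight' (e + 1) x - c * power_weight e x =
    x * (d + x) `^ (- al - 1) * (k + sg * x) `^ e *
    ((2 - al) * x * (k + sg * x) + 2 * d * (k + sg * x) + (sg * (e + 1) - c) * x * (d + x)).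
  by rewrite /power_weight /power_weight' -(powRB1_mulr (- al) dx0) addrK; ring.
rewrite !mulr_ge0 ?powR_ge0 // ?addr_ge0 ?mulr_ge0 ?subr_ge0 //; exact: ltW.
Qed.

End at_point.

Lemma power_weight0 (e : R) : power_weight e 0 = 0.
Proof. by rewrite /power_weight expr0n /= !mul0r. Qed.

Lemma power_weight_at1 (e x : R) : k + sg * x = 1 ->
  power_weight e x = x ^+ 2 * (d + x) `^ (- al).
Proof. by move=> s1; rewrite /power_weight s1 powR1 mulr1. Qed.

Lemma power_weight_powRN (p r v : R) :
  v / (k + sg * r) `^ p * (r ^+ 2 / (d + r) `^ al) = power_weight (- p) r * v.
Proof. by rewrite /power_weight !powRN; ring. Qed.

Lemma power_weight_powR (p r v : R) :
  v * ((k + sg * r) `^ p / (d + r) `^ al) * r ^+ 2 = power_weight p r * v.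
Proof. by rewrite /power_weight !powRN; ring. Qed.

Lemma hardy_power_weight (a b c e : R) (u du : R -> R) :
  0 < d -> 0 <= a <= b -> al <= 2 -> 0 < c -> c <= sg * (e + 1) ->
  {in `[a, b], forall r, 0 < k + sg * r} ->
  {within `[a, b], continuous u} -> {within `[a, b], continuous du} ->
  {in `]a, b[, forall r : R, is_derive r 1 u (du r)} ->
  (\int[lebesgue_measure]_(r in `[a, b]) (power_weight e r * u r ^+ 2)%:E <=
    (2 / c * (power_weight (e + 1) b * u b ^+ 2 - power_weight (e + 1) a * u a ^+ 2))%:E
    + (4 / c ^+ 2)%:E *
      \int[lebesgue_measure]_(r in `[a, b]) (power_weight (e + 2) r * du r ^+ 2)%:E)%E.
Proof.
move=> d0 /andP[a0 ab] al2 c0 ce s0 cu cdu du_u.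
have r0 r : r \in `[a, b] -> 0 <= r.
  by rewrite in_itv /= => /andP[ar _]; exact: le_trans ar.
have dr0 r : r \in `[a, b] -> 0 < d + r by move=> /r0; lra.
have oo_cc r : r \in `]a, b[ -> r \in `[a, b].
  by rewrite !in_itv /= => /andP[ar rb]; rewrite !ltW.
have cw e' : {within `[a, b], continuous (power_weight e')}.
  apply: derivable_within_continuous => r rab.
  by apply: ex_derive; exact: (is_derive_power_weight _ _ (dr0 r rab) (s0 r rab)).
have -> : (\int[lebesgue_measure]_(r in `[a, b]) (power_weight (e + 2) r * du r ^+ 2)%:E =
    \int[lebesgue_measure]_(r in `[a, b]) (power_weight e r * (k + sg * r) ^+ 2 * du r ^+ 2)%:E)%E.
  apply: eq_integral => r /set_mem /s0 sr; congr (_%:E).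
  by rewrite (_ : e + 2 = e + 1 + 1) 1?addrA // !power_weightS //; ring.
apply: (hardy_segment _ _ _ _ (power_weight' (e + 1)) _ (fun r => k + sg * r)) => //.
- apply: continuous_in_subspaceT => r /set_mem /= rab.
  exact: continuous_power_weight' (dr0 r rab) (s0 r rab).
- apply: continuous_subspaceT => r.
  exact: is_derive_continuous (is_derive_affine k sg r).
- by move=> r /oo_cc rab; exact: is_derive_power_weight (dr0 r rab) (s0 r rab).
- move=> r rab; split; last exact: power_weightS (s0 r rab).
    by rewrite /power_weight; apply: mulr_ge0; [apply: mulr_ge0|]; rewrite ?sqr_ge0 ?powR_ge0.
  exact: power_weight'_ge (dr0 r rab) (s0 r rab) _ d0 (r0 r rab) al2 ce.
Qed.

End power_weight.

Section C1_0_estimates.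
Context {R : realType}.

Lemma C1_0_continuous {u du : R -> R} : C1_0 u du -> {within `[0, +oo[, continuous u}.
Proof.
move=> [du_u [du0 _]]; apply/continuous_within_itvcyP; split.
  by move=> r; rewrite in_itv /= andbT => /du_u /is_derive_continuous.
have : (fun h => u 0 + h * (h^-1 * (u h - u 0))) @ 0^'+ --> u 0 + 0 * du 0.
  apply: cvgD; first exact: cvg_cst.
  by apply: cvgM => //; exact: cvg_at_right_filter cvg_id.
rewrite mul0r addr0; apply: cvg_trans; apply: near_eq_cvg; near=> h.
have h0 : 0 < h by near: h; exact: nbhs_right_gt.
by rewrite mulrA mulfV ?gt_eqF // mul1r addrC subrK.
Unshelve. all: by end_near.
Qed.

Lemma C1_0_itv {u du : R -> R} (a b : R) : C1_0 u du -> 0 <= a ->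
  [/\ {within `[a, b], continuous u}, {within `[a, b], continuous du}
    & {in `]a, b[, forall r : R, is_derive r 1 u (du r)}].
Proof.
move=> uC1 a0; have sub : `[a, b] `<=` `[0, +oo[.
  by move=> r /=; rewrite !in_itv /= andbT => /andP[ar _]; exact: le_trans ar.
have [du_u [_ [cdu _]]] := uC1; split.
- exact: continuous_subspaceW sub (C1_0_continuous uC1).
- exact: continuous_subspaceW sub cdu.
- by move=> r; rewrite in_itv /= => /andP[ar _]; apply: du_u; exact: le_lt_trans ar.
Qed.

Lemma integral_itvcy_cc (a b : R) (f : R -> R) : (forall r, b < r -> f r = 0) ->
  (\int[lebesgue_measure]_(r in `[a, +oo[) (f r)%:E =
   \int[lebesgue_measure]_(r in `[a, b]) (f r)%:E)%E.
Proof.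
move=> f0; rewrite integral_mkcond [RHS]integral_mkcond; apply: eq_integral => r _.
rewrite /patch !mem_setE !in_itv /= andbT.
by have [_|/f0 ->] := leP r b; rewrite ?andbT ?andbF //; case: ifP.
Qed.

Lemma hardy_inner {t alpha mu c : R} {u du : R -> R} :
  0 <= t -> alpha <= 2 -> 0 < c <= 1 + mu ->
  {within `[0, t], continuous u} -> {within `[0, t], continuous du} ->
  {in `]0, t[, forall r : R, is_derive r 1 u (du r)} ->
  (\int[lebesgue_measure]_(r in `[0%R, t%R])
      (u r ^+ 2 / (1 + `|r - t|) `^ (2 + mu) * (r ^+ 2 / (1 + t + r) `^ alpha))%:E
   <= (2 / c * (t ^+ 2 * (1 + t + t) `^ (- alpha) * u t ^+ 2))%:E
      + (4 / c ^+ 2)%:E * \int[lebesgue_measure]_(r in `[0%R, t%R])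
      (du r ^+ 2 / (1 + `|r - t|) `^ mu * (r ^+ 2 / (1 + t + r) `^ alpha))%:E)%E.
Proof.
move=> t0 al2 /andP[c0 cm] cu cdu du_u.
have s0 : {in `[0, t], forall r, 0 < 1 + t + -1 * r}.
  by move=> r; rewrite in_itv /= => /andP[_ rt]; lra.
have s_itv r : r \in `[0, t] -> 1 + `|r - t| = 1 + t + -1 * r.
  by rewrite in_itv /= => /andP[_ rt]; rewrite ler0_norm ?subr_le0 //; ring.
have := hardy_power_weight (1 + t) alpha (1 + t) (-1) 0 t c (- (2 + mu)) u du.
move=> /(_ _ _ al2 c0 _ s0 cu cdu du_u) hA.
under eq_integral => r /set_mem /s_itv -> do rewrite power_weight_powRN.
under [X in (_ + _ * X)%E]eq_integral => r /set_mem /s_itv -> do rewrite power_weight_powRN.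
have s1 : 1 + t + -1 * t = 1 by ring.
rewrite power_weight0 mul0r subr0 [power_weight _ _ _ _ _ t]power_weight_at1 //
  (_ : - (2 + mu) + 2 = - mu) in hA.
  by apply: hA; rewrite ?lexx //; lra.
by ring.
Qed.

Lemma hardy_outer {t b alpha gamma c : R} {u du : R -> R} :
  0 <= t -> t <= b -> alpha <= 2 -> 0 < c <= gamma ->
  {within `[t, b], continuous u} -> {within `[t, b], continuous du} ->
  {in `]t, b[, forall r : R, is_derive r 1 u (du r)} -> u b = 0 ->
  (\int[lebesgue_measure]_(r in `[t%R, b%R])
      (u r ^+ 2 / (1 + `|r - t|) `^ (1 - gamma) * (r ^+ 2 / (1 + t + r) `^ alpha))%:E
   <= (- (2 / c * (t ^+ 2 * (1 + t + t) `^ (- alpha) * u t ^+ 2)))%:E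
      + (4 / c ^+ 2)%:E * \int[lebesgue_measure]_(r in `[t%R, b%R])
      (du r ^+ 2 * ((1 + `|r - t|) `^ (1 + gamma) / (1 + t + r) `^ alpha) * r ^+ 2)%:E)%E.
Proof.
move=> t0 tb al2 /andP[c0 cg] cu cdu du_u ub.
have s0 : {in `[t, b], forall r, 0 < 1 - t + 1 * r}.
  by move=> r; rewrite in_itv /= => /andP[tr _]; lra.
have s_itv r : r \in `[t, b] -> 1 + `|r - t| = 1 - t + 1 * r.
  by rewrite in_itv /= => /andP[tr _]; rewrite ger0_norm ?subr_ge0 //; ring.
have := hardy_power_weight (1 + t) alpha (1 - t) 1 t b c (- (1 - gamma)) u du.
move=> /(_ _ _ al2 c0 _ s0 cu cdu du_u) hB.
under eq_integral => r /set_mem /s_itv -> do rewrite power_weight_powRN.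
under [X in (_ + _ * X)%E]eq_integral => r /set_mem /s_itv -> do rewrite power_weight_powR.
have s1 : 1 - t + 1 * t = 1 by ring.
rewrite ub expr0n /= mulr0 sub0r mulrN [power_weight _ _ _ _ _ t]power_weight_at1 //
  (_ : - (1 - gamma) + 2 = 1 + gamma) in hB.
  by apply: hB; rewrite ?t0 ?tb //; lra.
by ring.
Qed.

End C1_0_estimates.

Theorem lemma13p1 (R : realType) (gamma0 m0 : R) :
  0 < gamma0 -> 0 < m0 ->
  exists C : R,
  forall (alpha mu gamma : R),
    0 <= alpha <= 2 -> m0 <= 1 + mu -> gamma0 <= gamma ->
  forall (u du : R -> R), C1_0 u du ->
  forall t : R, 0 <= t ->
  (\int[lebesgue_measure]_(r in `[0%R, t%R]%classic)
      ((u r) ^+ 2 / (1 + `|r - t|) `^ (2 + mu) * (r ^+ 2 / (1 + t + r) `^ alpha))%:E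
   + \int[lebesgue_measure]_(r in `[t%R, +oo[%classic)
      ((u r) ^+ 2 / (1 + `|r - t|) `^ (1 - gamma) * (r ^+ 2 / (1 + t + r) `^ alpha))%:E
   <= C%:E * \int[lebesgue_measure]_(r in `[0%R, t%R]%classic)
      ((du r) ^+ 2 / (1 + `|r - t|) `^ mu * (r ^+ 2 / (1 + t + r) `^ alpha))%:E
   + C%:E * \int[lebesgue_measure]_(r in `[t%R, +oo[%classic)
      ((du r) ^+ 2 * ((1 + `|r - t|) `^ (1 + gamma) / (1 + t + r) `^ alpha) * r ^+ 2)%:E)%E.
Proof.
move=> g0 m0_gt0; pose c := Num.min gamma0 m0.
have c0 : 0 < c by rewrite lt_min g0 m0_gt0.
exists (4 / c ^+ 2) => alpha mu gamma /andP[_ al2] m0mu g0g u du uC1 t t0.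
have cm : 0 < c <= 1 + mu by rewrite c0 ge_min m0mu orbT.
have cg : 0 < c <= gamma by rewrite c0 ge_min g0g.
have [du_u [_ [_ [M uM]]]] := uC1.
pose b := `|M| + t + 1.
have [tb Mb] : t <= b /\ M < b.
  by rewrite /b; have := ler_norm M; have := normr_ge0 M; lra.
have [cuA cduA duA] := C1_0_itv 0 t uC1 (lexx 0).
have [cuB cduB duB] := C1_0_itv t b uC1 t0.
have hA := hardy_inner t0 al2 cm cuA cduA duA.
have hB := hardy_outer t0 tb al2 cg cuB cduB duB (uM b Mb).
rewrite !(integral_itvcy_cc t b).
- apply: le_trans (leeD hA hB) _.
  by rewrite addeACA EFinN subee // add0e.
- move=> r br; have r0 : 0 < r by lra.
  by rewrite (is_derive_eq0_tail uM _ (du_u r r0)) ?expr0n /= ?mul0r //; lra.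
- by move=> r br; rewrite uM ?expr0n /= ?mul0r //; lra.
Qed.
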